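(* Let $A\in B_\infty(L)$ with $A^T=A$, let $\{e_j\}_{j\in\mathbb N}$ be a complete orthonormal system in $L$, and $\Delta_M(A):=\sum_{j=1}^M a(Ae_j)a(\bar e_j)$. If the operators $\Delta_M(A)$ converge strongly on all of $\mathcal F^{(2)}$ as $M\to\infty$, then $A\in B_2(L)$.
   Context: $L$ is a separable complex Hilbert space with $\dim L=\infty$, scalar product antilinear in the first argument, and a conjugation $J:f\mapsto\bar f$ (antilinear involution with $(\bar f,\bar g)=(g,f)$); for bounded $A$, $\bar A:=JAJ$ and $A^T:=(\bar A)^*$. $B_\infty(L)$ and $B_2(L)$ denote the bounded and the Hilbert–Schmidt operators on $L$. $\mathcal F$ carries a Fock representation of the CCR over $L$: on a dense invariant domain $D$ there are operators $a(f),a^\dagger(f)$, linear in $f$, with $[a(f),a(g)]=0=[a^\dagger(f),a^\dagger(g)]$, $[a(f),a^\dagger(g)]=(\bar f,g)\mathrm{id}$, $(a(f)\Phi,\Psi)=(\Phi,a^\dagger(\bar f)\Psi)$, a unit vacuum $\Omega$ with $a(f)\Omega=0$, and $\mathcal F$ is the closure of the span of all vectors $a^\dagger(f_n)\cdots a^\dagger(f_1)\Omega$. $\mathcal F^{(2)}$ is the closure of $\operatorname{span}\{a^\dagger(f_2)a^\dagger(f_1)\Omega\}$; $a(f),a^\dagger(f)$ extend to bounded operators between the closed $n$-particle spaces, which are used. *)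

From HB Require Import structures.
From mathcomp Require Import all_boot all_order all_algebra.
From mathcomp Require Import complex.
From mathcomp Require Import reals.

Set Implicit Arguments.
Unset Strict Implicit.
Unset Printing Implicit Defensive.

Import Order.TTheory GRing.Theory Num.Theory.
Local Open Scope ring_scope.

Section Hilbert.
Variables (R : realType) (V : lmodType R[i]).

Definition ipnorm (ip : V -> V -> R[i]) (x : V) : R := Num.sqrt (complex.Re (ip x x)).

Definition ip_cvg_to (ip : V -> V -> R[i]) (u : nat -> V) (l : V) : Prop :=
  forall eps : R, 0 < eps -> exists N : nat,
    forall n : nat, (N <= n)%N -> ipnorm ip (u n - l) < eps.

Definition ip_cauchy (ip : V -> V -> R[i]) (u : nat -> V) : Prop :=
  forall eps : R, 0 < eps -> exists N : nat,
    forall m n : nat, (N <= m)%N -> (N <= n)%N -> ipnorm ip (u m - u n) < eps.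

Record is_hilbert (ip : V -> V -> R[i]) : Prop := {
  ip_linr : forall (c : R[i]) (x y z : V), ip x (c *: y + z) = c * ip x y + ip x z;
  ip_herm : forall x y : V, ip y x = conjc (ip x y);
  ip_ge0 : forall x : V, 0 <= ip x x;
  ip_def : forall x : V, ip x x = 0 -> x = 0;
  ip_complete : forall u : nat -> V, ip_cauchy ip u -> exists l : V, ip_cvg_to ip u l
}.

Definition in_span (S : V -> Prop) (x : V) : Prop :=
  exists s : seq (R[i] * V), (forall p, p \in s -> S p.2) /\
    x = \sum_(p <- s) p.1 *: p.2.

Definition in_closure (ip : V -> V -> R[i]) (P : V -> Prop) (x : V) : Prop :=
  forall eps : R, 0 < eps -> exists y : V, P y /\ ipnorm ip (x - y) < eps.

Definition is_dense (ip : V -> V -> R[i]) (P : V -> Prop) : Prop :=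
  forall x : V, in_closure ip P x.

Definition is_subspace (P : V -> Prop) : Prop :=
  P 0 /\ forall (c : R[i]) (x y : V), P x -> P y -> P (c *: x + y).

Definition linear_on (W : lmodType R[i]) (P : V -> Prop) (T : V -> W) : Prop :=
  forall (c : R[i]) (x y : V), P x -> P y -> T (c *: x + y) = c *: T x + T y.

Definition bounded_on (ip : V -> V -> R[i]) (P : V -> Prop) (T : V -> V) : Prop :=
  linear_on P T /\
  exists K : R, forall x : V, P x -> ipnorm ip (T x) <= K * ipnorm ip x.

Definition bounded_op (ip : V -> V -> R[i]) (T : V -> V) : Prop :=
  bounded_on ip (fun _ => True) T.

Definition is_adjoint (ip : V -> V -> R[i]) (T Ts : V -> V) : Prop :=
  forall f g : V, ip (Ts f) g = ip f (T g).

Definition is_conjugation (ip : V -> V -> R[i]) (J : V -> V) : Prop :=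
  (forall (c : R[i]) (x y : V), J (c *: x + y) = conjc c *: J x + J y) /\
  (forall x : V, J (J x) = x) /\
  (forall f g : V, ip (J f) (J g) = ip g f).

(* A^T = A, where  A^T := (bar A)^*  and  bar A := J A J *)
Definition is_symmetric (ip : V -> V -> R[i]) (J A : V -> V) : Prop :=
  is_adjoint ip (fun x => J (A (J x))) A.

Definition complete_ONS (ip : V -> V -> R[i]) (e : nat -> V) : Prop :=
  (forall i j : nat, ip (e i) (e j) = (i == j)%:R) /\
  (forall f : V, (forall j : nat, ip (e j) f = 0) -> f = 0).

Definition hilbert_schmidt (ip : V -> V -> R[i]) (A : V -> V) : Prop :=
  exists u : nat -> V, complete_ONS ip u /\
  exists s : R, forall eps : R, 0 < eps -> exists N : nat, forall M : nat,
    (N <= M)%N -> `| \sum_(j < M) (ipnorm ip (A (u j))) ^+ 2 - s | < eps.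

End Hilbert.

Section Fock.
Variables (R : realType) (L F : lmodType R[i]).
Variables (ipL : L -> L -> R[i]) (ipF : F -> F -> R[i]) (J : L -> L).
Variables (a ad : L -> F -> F) (Omega : F).

(* a^dagger(f_n) ... a^dagger(f_1) Omega  for  fs = [:: f_n; ...; f_1] *)
Definition fockvec (fs : seq L) : F := foldr (fun f x => ad f x) Omega fs.

Definition npart (n : nat) (x : F) : Prop :=
  in_closure ipF (in_span (fun y => exists fs : seq L, size fs = n /\ y = fockvec fs)) x.

Record is_fock_rep (D : F -> Prop) : Prop := {
  D_sub : is_subspace D;
  D_dense : is_dense ipF D;
  D_a : forall f x, D x -> D (a f x);
  D_ad : forall f x, D x -> D (ad f x);
  a_linf : forall (c : R[i]) f g x, D x -> a (c *: f + g) x = c *: a f x + a g x;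
  ad_linf : forall (c : R[i]) f g x, D x -> ad (c *: f + g) x = c *: ad f x + ad g x;
  a_linx : forall f, linear_on D (a f);
  ad_linx : forall f, linear_on D (ad f);
  ccr_aa : forall f g x, D x -> a f (a g x) = a g (a f x);
  ccr_adad : forall f g x, D x -> ad f (ad g x) = ad g (ad f x);
  ccr_aad : forall f g x, D x -> a f (ad g x) - ad g (a f x) = ipL (J f) g *: x;
  a_adj : forall f x y, D x -> D y -> ipF (a f x) y = ipF x (ad (J f) y);
  Omega_D : D Omega;
  Omega_unit : ipF Omega Omega = 1;
  a_Omega : forall f, a f Omega = 0;
  fock_cyclic : is_dense ipF (in_span (fun y => exists fs : seq L, y = fockvec fs));
  (* a(f), a^dagger(f) act as bounded operators between the closed
     n-particle spaces (these extensions are the ones used) *)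
  a_npart : forall f n x, npart n.+1 x -> npart n (a f x);
  ad_npart : forall f n x, npart n x -> npart n.+1 (ad f x);
  a_bdd : forall f n, bounded_on ipF (npart n.+1) (a f);
  ad_bdd : forall f n, bounded_on ipF (npart n) (ad f)
}.

(* Delta_M(A) = sum_{j=1}^M a(A e_j) a(bar e_j)  (e indexed from 0 here) *)
Definition DeltaM (A : L -> L) (e : nat -> L) (M : nat) (x : F) : F :=
  \sum_(j < M) a (A (e j)) (a (J (e j)) x).

End Fock.

(* Write alpha k l := (J (A e_k), e_l): a symmetric matrix whose k-th row has
   square sum ||A e_k||^2 (Parseval in the basis J e_l).  By the CCR the
   two-particle vectors psi k l := a^dagger(e_k) a^dagger(e_l) Omega satisfy
   Delta_M (psi k l) = ([k < M] + [l < M]) alpha k l Omega.  If A is not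
   Hilbert-Schmidt then, since the rows below n carry at most n K of mass,
   square blocks [n, N)^2 with arbitrarily large mass sum |alpha k l|^2 exist
   beyond every n.  Take consecutive blocks [N_i, N_(i+1))^2 of mass
   m_i >= 4^i / 2 and X_i := (2 m_i)^-1 sum_block conj(alpha k l) psi k l:
   then ||X_i|| <= 2^-i and Delta_(N_j) X_i = [i < j] Omega, so x := sum_i X_i
   lies in F^(2) while Delta_(N_j) x = j Omega diverges. *)

From HB Require Import structures.
From mathcomp Require Import all_boot all_order all_algebra.
From mathcomp Require Import complex.
From mathcomp Require Import reals.
From mathcomp Require Import ring lra.
From mathcomp Require Import classical_sets boolp.

Set Implicit Arguments.
Unset Strict Implicit.
Unset Printing Implicit Defensive.

Import Order.TTheory GRing.Theory Num.Theory.
Local Open Scope ring_scope.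
Local Open Scope complex_scope.

Lemma sum_nat_delta (K : nzRingType) m n k (f : nat -> K) :
  \sum_(m <= l < n) (k == l)%:R * f l = ((m <= k)%N && (k < n)%N)%:R * f k.
Proof.
case hk: ((m <= k)%N && (k < n)%N).
  rewrite (bigD1_seq k) ?mem_index_iota ?iota_uniq //= eqxx mul1r big1 ?addr0 //.
  by move=> i /negbTE; rewrite eq_sym => ->; rewrite mul0r.
rewrite mul0r big_seq big1 // => i; rewrite mem_index_iota => hi.
by case: eqP hi hk => [->->//|_ _ _]; rewrite mul0r.
Qed.

Lemma sum_nat2_sym_delta (K : comNzRingType) p q k l (g : nat -> nat -> K) :
  (p <= k < q)%N -> (p <= l < q)%N ->
  \sum_(p <= m < q) \sum_(p <= n < q)
     g m n * ((k == m)%:R * (l == n)%:R + (k == n)%:R * (l == m)%:R) = g k l + g l k.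
Proof.
move=> hk hl.
have split_delta m n : g m n * ((k == m)%:R * (l == n)%:R + (k == n)%:R * (l == m)%:R) =
   (k == m)%:R * ((l == n)%:R * g m n) + (l == m)%:R * ((k == n)%:R * g m n) by ring.
under eq_bigr => m _ do under eq_bigr => n _ do rewrite split_delta.
under eq_bigr => m _ do rewrite big_split /= -!mulr_sumr !sum_nat_delta hk hl !mul1r.
by rewrite big_split /= !sum_nat_delta hk hl !mul1r.
Qed.

Lemma sum_nat_indicator_lt (K : nzRingType) j n :
  (j <= n)%N -> \sum_(0 <= i < n) (i < j)%N%:R = j%:R :> K.
Proof.
move=> jn; rewrite (big_cat_nat (leq0n j) jn) /= [X in _ + X](_ : _ = 0).
  rewrite addr0 -[j in RHS]subn0 -sumr_const_nat.
  by apply: eq_big_nat => i /andP[_ ->].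
by rewrite big_nat big1 // => i /andP[ji _]; rewrite ltnNge ji.
Qed.

Lemma ler_sum_nat_widen (R : numDomainType) p m n (f : nat -> R) :
  (p <= m)%N -> (m <= n)%N -> (forall i, 0 <= f i) ->
  \sum_(p <= i < m) f i <= \sum_(p <= i < n) f i.
Proof.
move=> pm mn f0; rewrite (big_cat_nat pm mn) /= lerDl.
by apply: sumr_ge0 => i _; exact: f0.
Qed.

Lemma nondecreasing_bounded_sup (R : realType) (T : nat -> R) (B : R) :
  (forall n, T n <= T n.+1) -> (forall n, T n <= B) ->
  exists s, (forall n, T n <= s) /\
    forall eps, 0 < eps -> exists N, forall n, (N <= n)%N -> s - eps < T n.
Proof.
move=> Tinc TB.
have Tmono : {homo T : m n / (m <= n)%N >-> m <= n}.
  by apply: homo_leq => //; exact: le_trans.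
pose E : set R := fun x => exists n, x = T n.
have hs : has_sup E.
  split; first by exists (T 0%N), 0%N.
  by exists B => _ [n ->]; exact: TB.
exists (sup E); split.
  by move=> n; apply: sup_upper_bound => //; exists n.
move=> eps eps0; have [x [N ->] hx] := sup_adherent eps0 hs.
by exists N => n Nn; exact: (lt_le_trans hx (Tmono _ _ Nn)).
Qed.

Lemma exists_increasing_chain (P : nat -> nat -> nat -> Prop) :
  (forall i n, exists n', (n < n')%N /\ P i n n') ->
  exists N : nat -> nat, N 0%N = 0%N /\ forall i, (N i < N i.+1)%N /\ P i (N i) (N i.+1).
Proof.
move=> hP; pose next i n := sval (cid (hP i n)).
have nextP i n : (n < next i n)%N /\ P i n (next i n) := svalP (cid (hP i n)).
pose N := fix N i := if i is i'.+1 then next i' (N i') else 0%N.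
by exists N; split => // i; exact: nextP.
Qed.

Section Pow2Inv.
Variable R : realType.

Definition pow2inv (n : nat) : R := ((2 ^ n)%N%:R)^-1.

Lemma pow2inv_gt0 n : 0 < pow2inv n.
Proof. by rewrite /pow2inv invr_gt0 ltr0n expn_gt0. Qed.

Lemma pow2invS n : pow2inv n.+1 = pow2inv n / 2.
Proof. by rewrite /pow2inv expnS natrM invfM mulrC. Qed.

Lemma pow2inv_le n m : (n <= m)%N -> pow2inv m <= pow2inv n.
Proof.
move=> nm; rewrite /pow2inv lef_pV2 ?posrE ?ltr0n ?expn_gt0 ?ler_nat ?leq_exp2l //.
Qed.

Lemma sum_pow2inv n k :
  \sum_(n <= i < n + k) pow2inv i = 2 * (pow2inv n - pow2inv (n + k)).
Proof.
elim: k => [|k IH]; first by rewrite addn0 big_geq // subrr mulr0.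
by rewrite addnS big_nat_recr /= ?leq_addr // IH pow2invS; field.
Qed.

Lemma sum_pow2inv_le n m : \sum_(n <= i < m) pow2inv i <= 2 * pow2inv n.
Proof.
case: (leqP n m) => nm.
  have := sum_pow2inv n (m - n); rewrite (subnKC nm) => ->.
  by rewrite ler_pM2l ?ltr0n // gerBl ltW ?pow2inv_gt0.
by rewrite big_geq ?(ltnW nm) // mulr_ge0 ?ler0n ?ltW ?pow2inv_gt0.
Qed.

Lemma pow2inv_small eps : 0 < eps ->
  exists n, forall m, (n <= m)%N -> 2 * pow2inv m < eps.
Proof.
move=> e0; set n := Num.Def.archi_bound (2 / eps).
have hn := archi_boundP (ltW (divr_gt0 (ltr0n R 2) e0)).
exists n => m nm; apply: le_lt_trans (ler_wpM2l (ler0n R 2) (pow2inv_le nm)) _.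
rewrite /pow2inv ltr_pdivrMr ?ltr0n ?expn_gt0 // -ltr_pdivrMl // mulrC.
by apply: lt_trans hn _; rewrite ltr_nat ltn_expl.
Qed.

End Pow2Inv.

Definition sqmod (R : realType) (z : R[i]) : R :=
  complex.Re z ^+ 2 + complex.Im z ^+ 2.

Section SquaredModulus.
Variable R : realType.
Implicit Types z : R[i].

Lemma sqmod_ge0 z : 0 <= sqmod z.
Proof. by rewrite addr_ge0 ?sqr_ge0. Qed.

Lemma mulcJ z : z * conjc z = (sqmod z)%:C.
Proof.
case: z => a b; rewrite /sqmod /=; apply/eqP; rewrite eq_complex /=.
by apply/andP; split; apply/eqP; ring.
Qed.

Lemma realc_sum (I : Type) (r : seq I) (f : I -> R) :
  (\sum_(i <- r) f i)%:C = \sum_(i <- r) (f i)%:C.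
Proof. exact: rmorph_sum. Qed.

Lemma realc_mul_sqmod (r : R) z : (r * sqmod z)%:C = r%:C * (z * conjc z).
Proof. by rewrite mulcJ rmorphM. Qed.

Lemma conjc_realcM (r : R) z : conjc (r%:C * z) = r%:C * conjc z.
Proof. by case: z => x y /=; congr (_ +i* _); ring. Qed.

Lemma sqmod_eq0 z : sqmod z = 0 -> z = 0.
Proof.
move/eqP; rewrite paddr_eq0 ?sqr_ge0 // !sqrf_eq0 => /andP[/eqP h1 /eqP h2].
by apply/eqP; rewrite eq_complex h1 h2 /= !eqxx.
Qed.

Lemma Re_le_sqrt_sqmod z : complex.Re z <= Num.sqrt (sqmod z).
Proof.
apply: le_trans (ler_norm (complex.Re z)) _.
by rewrite -sqrtr_sqr ler_sqrt ?sqmod_ge0 // lerDl sqr_ge0.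
Qed.

Lemma ge0_complexRe z : 0 <= z -> z = (complex.Re z)%:C.
Proof. by move=> /ger0_Im; case: z => a b /= ->. Qed.

End SquaredModulus.

Section InnerProduct.
Variables (R : realType) (V : lmodType R[i]) (ip : V -> V -> R[i]).
Hypothesis H : is_hilbert ip.

Lemma ip0r x : ip x 0 = 0.
Proof.
have := ip_linr H 1 x 0 0; rewrite scale1r addr0 mul1r => h.
by apply/(addrI (ip x 0)); rewrite addr0 -h.
Qed.

Lemma ipDr x y z : ip x (y + z) = ip x y + ip x z.
Proof. by have := ip_linr H 1 x y z; rewrite scale1r mul1r. Qed.

Lemma ipZr c x y : ip x (c *: y) = c * ip x y.
Proof. by have := ip_linr H c x y 0; rewrite !addr0 ip0r addr0. Qed.

Lemma ipNr x y : ip x (- y) = - ip x y.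
Proof. by rewrite -scaleN1r ipZr mulN1r. Qed.

Lemma ipBr x y z : ip x (y - z) = ip x y - ip x z.
Proof. by rewrite ipDr ipNr. Qed.

Lemma ip_sumr x (I : Type) (r : seq I) (P : pred I) (f : I -> V) :
  ip x (\sum_(i <- r | P i) f i) = \sum_(i <- r | P i) ip x (f i).
Proof.
elim: r => [|j r IH]; first by rewrite !big_nil ip0r.
by rewrite !big_cons; case: (P j); rewrite ?ipDr IH.
Qed.

Lemma ipC x y : ip x y = conjc (ip y x).
Proof. exact: ip_herm. Qed.

Lemma ip0l x : ip 0 x = 0.
Proof. by rewrite ipC ip0r conjc0. Qed.

Lemma ipDl x y z : ip (x + y) z = ip x z + ip y z.
Proof. by rewrite ipC ipDr rmorphD [ip x z]ipC [ip y z]ipC. Qed.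

Lemma ipZl c x y : ip (c *: x) y = conjc c * ip x y.
Proof. by rewrite ipC ipZr rmorphM [ip x y]ipC. Qed.

Lemma ipNl x y : ip (- x) y = - ip x y.
Proof. by rewrite -scaleN1r ipZl rmorphN rmorph1 mulN1r. Qed.

Lemma ipBl x y z : ip (x - y) z = ip x z - ip y z.
Proof. by rewrite ipDl ipNl. Qed.

Lemma ip_suml x (I : Type) (r : seq I) (P : pred I) (f : I -> V) :
  ip (\sum_(i <- r | P i) f i) x = \sum_(i <- r | P i) ip (f i) x.
Proof.
elim: r => [|j r IH]; first by rewrite !big_nil ip0l.
by rewrite !big_cons; case: (P j); rewrite ?ipDl IH.
Qed.

Definition ipnorm2 x := complex.Re (ip x x).

Lemma ipxx x : ip x x = (ipnorm2 x)%:C.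
Proof. exact/ge0_complexRe/ip_ge0. Qed.

Lemma ipnorm2_ge0 x : 0 <= ipnorm2 x.
Proof. by have := ip_ge0 H x; rewrite ipxx lecR. Qed.

Lemma ipnorm2_eq0 x : ipnorm2 x = 0 -> x = 0.
Proof. by move=> h; apply: (ip_def H); rewrite ipxx h. Qed.

Lemma ipnorm2B x y : ipnorm2 (x - y) = ipnorm2 (y - x).
Proof. by rewrite /ipnorm2 -opprB ipNl ipNr opprK. Qed.

Lemma sqr_ipnorm x : ipnorm ip x ^+ 2 = ipnorm2 x.
Proof. exact/sqr_sqrtr/ipnorm2_ge0. Qed.

Lemma ipnorm_ge0 x : 0 <= ipnorm ip x.
Proof. exact: sqrtr_ge0. Qed.

Lemma ipnorm0 : ipnorm ip 0 = 0.
Proof. by rewrite /ipnorm ip0r sqrtr0. Qed.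

Lemma ipnorm_eq0 x : ipnorm ip x = 0 -> x = 0.
Proof. by move=> h; apply: ipnorm2_eq0; rewrite -sqr_ipnorm h expr0n. Qed.

Lemma ipnormN x : ipnorm ip (- x) = ipnorm ip x.
Proof. by rewrite /ipnorm ipNl ipNr opprK. Qed.

Lemma ipnormB x y : ipnorm ip (x - y) = ipnorm ip (y - x).
Proof. by rewrite -ipnormN opprB. Qed.

Lemma ipnorm_lt x eps : 0 < eps -> (ipnorm ip x < eps) = (ipnorm2 x < eps ^+ 2).
Proof. by move=> e0; rewrite -sqr_ipnorm ltr_pXn2r // nnegrE ?ipnorm_ge0 ?ltW. Qed.

Lemma cauchy_schwarz x y : sqmod (ip y x) <= ipnorm2 x * ipnorm2 y.
Proof.
have [y0|ny0] := eqVneq (ipnorm2 y) 0.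
  by rewrite (ipnorm2_eq0 y0) ip0l /ipnorm2 ip0r mulr0 /sqmod /= expr0n addr0.
have ay : 0 < ipnorm2 y by rewrite lt_neqAle eq_sym ny0 ipnorm2_ge0.
set a := ipnorm2 y; set b := ip y x.
(* the norm of the projection residual  a x - (y, x) y  is nonnegative *)
pose w := a%:C *: x - b *: y.
have hw : ip w w = a%:C * (a%:C * (ipnorm2 x)%:C - b * conjc b).
  rewrite /w !ipBl !ipBr !ipZl !ipZr conjc_real !ipxx -/a [ip x y]ipC -/b; ring.
have := ip_ge0 H w; rewrite hw pmulr_rge0 ?ltcR // subr_ge0 mulcJ -rmorphM lecR.
by rewrite mulrC.
Qed.

Lemma Re_ip_le x y : complex.Re (ip y x) <= ipnorm ip x * ipnorm ip y.
Proof.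
apply: (le_trans (Re_le_sqrt_sqmod _)); rewrite /ipnorm -sqrtrM ?ipnorm2_ge0 //.
by rewrite ler_sqrt ?mulr_ge0 ?ipnorm2_ge0 // cauchy_schwarz.
Qed.

Lemma ipnormD x y : ipnorm ip (x + y) <= ipnorm ip x + ipnorm ip y.
Proof.
rewrite -[X in _ <= X]ger0_norm ?addr_ge0 ?ipnorm_ge0 // -sqrtr_sqr.
rewrite [X in X <= _]/ipnorm ler_sqrt ?sqr_ge0 //.
rewrite sqrrD !sqr_ipnorm /ipnorm2 ipDl !ipDr !raddfD /=.
have h1 := Re_ip_le y x; have h2 := Re_ip_le x y.
rewrite -/(ipnorm2 x) -/(ipnorm2 y); lra.
Qed.

Lemma ipnorm_sum (I : Type) (r : seq I) (P : pred I) (f : I -> V) :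
  ipnorm ip (\sum_(i <- r | P i) f i) <= \sum_(i <- r | P i) ipnorm ip (f i).
Proof.
elim: r => [|j r IH]; first by rewrite !big_nil ipnorm0.
rewrite !big_cons; case: (P j) => //.
by apply: (le_trans (ipnormD _ _)); rewrite lerD2l.
Qed.

Lemma ip_cauchy_ipnorm_le (u : nat -> V) (b : nat -> R) :
  (forall n m, (n <= m)%N -> ipnorm ip (u m - u n) <= b n) ->
  (forall eps, 0 < eps -> exists N, forall n, (N <= n)%N -> b n < eps) ->
  ip_cauchy ip u.
Proof.
move=> ub bsmall eps e0; have [N hN] := bsmall _ e0; exists N => m n Nm Nn.
case: (leqP n m) => nm; first exact: le_lt_trans (ub _ _ nm) (hN _ Nn).
by rewrite ipnormB; exact: le_lt_trans (ub _ _ (ltnW nm)) (hN _ Nm).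
Qed.

Lemma pow2inv_series_cvg (X : nat -> V) : (forall i, ipnorm ip (X i) <= pow2inv R i) ->
  exists x, ip_cvg_to ip (fun n => \sum_(0 <= i < n) X i) x.
Proof.
move=> hX; apply: (ip_complete H); apply: ip_cauchy_ipnorm_le (pow2inv_small (R:=R)).
move=> n m nm; rewrite (big_cat_nat (leq0n n) nm) /= addrC addrK.
apply: le_trans (ipnorm_sum _ _ _) _; apply: le_trans (sum_pow2inv_le R n m).
by apply: ler_sum => i _; exact: hX.
Qed.

Lemma arith_progression_not_cvg (v : V) (N : nat -> nat) (u : nat -> V) l :
  ip v v = 1 -> (forall j, (j <= N j)%N) -> (forall j, u (N j) = j%:R *: v) ->
  ~ ip_cvg_to ip u l.
Proof.
move=> v1 Nge uN hl; have half_gt0 : 0 < 2^-1 :> R by rewrite invr_gt0.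
have [K hK] := hl _ half_gt0.
have h1 := hK _ (Nge K); have h2 := hK _ (leq_trans (leqnSn K) (Nge K.+1)).
have nv : ipnorm ip v = 1 by rewrite /ipnorm v1 sqrtr1.
have : ipnorm ip v < 2^-1 + 2^-1.
  rewrite -[v](_ : u (N K.+1) - l + (l - u (N K)) = v).
    by apply: le_lt_trans (ipnormD _ _) _; rewrite [X in _ + X]ipnormB ltrD.
  by rewrite addrA addrNK !uN -scalerBl -addn1 natrD addrAC subrr add0r scale1r.
rewrite nv; lra.
Qed.

Lemma closure_span (S : V -> Prop) x : in_span S x -> in_closure ip (in_span S) x.
Proof. by move=> h eps e0; exists x; rewrite subrr ipnorm0. Qed.

Lemma closure_lim (P : V -> Prop) (u : nat -> V) x : (forall n, P (u n)) ->
  ip_cvg_to ip u x -> in_closure ip P x.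
Proof.
move=> hu hx eps e0; have [N hN] := hx _ e0; exists (u N); split => //.
by rewrite ipnormB; apply: hN.
Qed.

Section FourierSums.
Variable u : nat -> V.
Hypothesis hu : complete_ONS ip u.
Variable y : V.

Let c l := ip (u l) y.
Let s N := \sum_(0 <= l < N) c l *: u l.
Let T N := \sum_(0 <= l < N) sqmod (c l).

Lemma ip_basis_fourier m N : ip (u m) (s N) = (m < N)%N%:R * c m.
Proof.
rewrite /s ip_sumr; under eq_bigr do rewrite ipZr (proj1 hu) mulrC.
by rewrite sum_nat_delta.
Qed.

Lemma ip_fourier_fourier N M : (M <= N)%N ->
  ip (s N) (s M) = (T M)%:C /\ ip (s M) (s N) = (T M)%:C.
Proof.
move=> MN; split.
  rewrite {1}/s ip_suml (big_cat_nat (leq0n M) MN) /= [X in _ + X](_ : _ = 0).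
    rewrite addr0 /T realc_sum; apply: eq_big_nat => l /andP[_ hl].
    by rewrite ipZl ip_basis_fourier hl mul1r mulrC mulcJ.
  rewrite big_nat big1 // => l /andP[hl _].
  by rewrite ipZl ip_basis_fourier ltnNge hl mul0r mulr0.
rewrite {1}/s ip_suml /T realc_sum; apply: eq_big_nat => l /andP[_ hl].
by rewrite ipZl ip_basis_fourier (leq_trans hl MN) mul1r mulrC mulcJ.
Qed.

Lemma ipnorm2_fourier_residual N : ipnorm2 (y - s N) = ipnorm2 y - T N.
Proof.
have ip_s_y : ip (s N) y = (T N)%:C.
  rewrite /s /T ip_suml realc_sum; apply: eq_bigr => l _.
  by rewrite ipZl -/(c l) mulrC mulcJ.
apply: complexI; rewrite -ipxx ipBl !ipBr ip_s_y [ip y (s N)]ipC ip_s_y.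
have [-> _] := ip_fourier_fourier (leqnn N); rewrite conjc_real ipxx rmorphB; ring.
Qed.

Lemma bessel N : T N <= ipnorm2 y.
Proof. by rewrite -subr_ge0 -ipnorm2_fourier_residual ipnorm2_ge0. Qed.

Lemma ipnorm2_fourierB N M : (M <= N)%N -> ipnorm2 (s N - s M) = T N - T M.
Proof.
move=> MN; apply: complexI; rewrite -ipxx ipBl !ipBr.
have [-> ->] := ip_fourier_fourier MN; have [-> _] := ip_fourier_fourier (leqnn N).
have [-> _] := ip_fourier_fourier (leqnn M); rewrite rmorphB; ring.
Qed.

Lemma parseval eps : 0 < eps -> exists N, ipnorm2 y - eps < T N.
Proof.
move=> e0.
have Tinc n : T n <= T n.+1 by rewrite /T big_nat_recr //= lerDl sqmod_ge0.
have [tau [Tt Tcv]] := nondecreasing_bounded_sup Tinc bessel.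
have /(ip_complete H) [z hz] : ip_cauchy ip s.
  apply: (@ip_cauchy_ipnorm_le _ (fun n => Num.sqrt (tau - T n))).
    move=> n m nm; rewrite -ler_sqr ?nnegrE ?ipnorm_ge0 ?sqrtr_ge0 //.
    by rewrite sqr_ipnorm sqr_sqrtr ?ipnorm2_fourierB // ?subr_ge0 // lerD2r.
  move=> d d0; have [K hK] := Tcv _ (exprn_gt0 2 d0); exists K => n Kn.
  rewrite -ltr_sqr ?nnegrE ?sqrtr_ge0 ?ltW // sqr_sqrtr ?subr_ge0 //.
  by have := hK n Kn; lra.
(* the limit has the same coefficients as y, hence equals y by completeness of u *)
have yz : y = z.
  apply/eqP; rewrite -subr_eq0; apply/eqP; apply: (proj2 hu) => m.
  apply: sqmod_eq0; apply/eqP; rewrite eq_le sqmod_ge0 andbT.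
  apply/ler_addgt0Pr => d d0; rewrite add0r.
  have sd0 : 0 < Num.sqrt d by rewrite sqrtr_gt0.
  have [N hN] := hz _ sd0.
  pose N' := maxn N m.+1.
  have -> : ip (u m) (y - z) = ip (u m) (s N' - z).
    by rewrite !ipBr ip_basis_fourier leq_maxr mul1r.
  apply: le_trans (cauchy_schwarz _ _) _.
  rewrite [ipnorm2 (u m)]/ipnorm2 (proj1 hu) eqxx /= mulr1.
  have := hN N' (leq_maxl _ _).
  by rewrite ipnorm_lt // sqr_sqrtr ?(ltW d0) // => /ltW.
have se0 : 0 < Num.sqrt eps by rewrite sqrtr_gt0.
have [N hN] := hz _ se0; exists N.
have := hN N (leqnn N); rewrite ipnorm_lt ?sqrtr_gt0 // sqr_sqrtr ?ltW //.
rewrite -yz ipnorm2B ipnorm2_fourier_residual; lra.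
Qed.

End FourierSums.

End InnerProduct.

Section LinearOn.
Variables (R : realType) (V W : lmodType R[i]) (D : V -> Prop).
Hypothesis HD : is_subspace D.

Lemma subspace0 : D 0.
Proof. exact: HD.1. Qed.

Lemma subspaceD x y : D x -> D y -> D (x + y).
Proof. by move=> hx hy; have := HD.2 1 x y hx hy; rewrite scale1r. Qed.

Lemma subspaceZ c x : D x -> D (c *: x).
Proof. by move=> hx; have := HD.2 c x 0 hx subspace0; rewrite addr0. Qed.

Lemma subspace_sum (I : Type) (r : seq I) (v : I -> V) :
  (forall i, D (v i)) -> D (\sum_(i <- r) v i).
Proof.
move=> h; elim: r => [|j r IH]; first by rewrite big_nil; exact: subspace0.
by rewrite big_cons; apply: subspaceD.
Qed.

Variable T : V -> W.
Hypothesis HT : linear_on D T.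

Lemma linear_on0 : T 0 = 0.
Proof.
have := HT 1 subspace0 subspace0; rewrite scale1r addr0 scale1r => h.
by apply/(addrI (T 0)); rewrite addr0 -h.
Qed.

Lemma linear_onD x y : D x -> D y -> T (x + y) = T x + T y.
Proof. by move=> hx hy; have := HT 1 hx hy; rewrite !scale1r. Qed.

Lemma linear_onZ c x : D x -> T (c *: x) = c *: T x.
Proof. by move=> hx; have := HT c hx subspace0; rewrite !addr0 linear_on0 addr0. Qed.

Lemma linear_on_sum (I : Type) (r : seq I) (v : I -> V) :
  (forall i, D (v i)) -> T (\sum_(i <- r) v i) = \sum_(i <- r) T (v i).
Proof.
move=> h; elim: r => [|j r IH]; first by rewrite !big_nil linear_on0.
by rewrite !big_cons linear_onD ?IH //; apply: subspace_sum.
Qed.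

End LinearOn.

Lemma linear_onB (R : realType) (V W : lmodType R[i]) (P : V -> Prop) (T : V -> W) x y :
  linear_on P T -> P x -> P y -> T (x - y) = T x - T y.
Proof.
move=> h hx hy; have := h (-1) y x hy hx.
by rewrite !scaleN1r addrC [- T y + _]addrC.
Qed.

Section Span.
Variables (R : realType) (V : lmodType R[i]) (S : V -> Prop).

Lemma span_gen x : S x -> in_span S x.
Proof.
move=> h; exists [:: (1, x)]; split; last by rewrite big_seq1 scale1r.
by move=> p; rewrite inE => /eqP ->.
Qed.

Lemma spanD x y : in_span S x -> in_span S y -> in_span S (x + y).
Proof.
move=> [s1 [h1 ->]] [s2 [h2 ->]]; exists (s1 ++ s2); split; last by rewrite big_cat.
by move=> p; rewrite mem_cat => /orP[/h1|/h2].
Qed.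

Lemma spanZ c x : in_span S x -> in_span S (c *: x).
Proof.
move=> [s [h ->]]; exists [seq (c * p.1, p.2) | p <- s]; split.
  by move=> p /mapP[q /h hq ->].
by rewrite big_map scaler_sumr; apply: eq_bigr => p _; rewrite scalerA.
Qed.

Lemma span_sum (I : Type) (r : seq I) (v : I -> V) :
  (forall i, in_span S (v i)) -> in_span S (\sum_(i <- r) v i).
Proof.
move=> h; elim: r => [|j r IH].
  by rewrite big_nil; exists [::]; split => //; rewrite big_nil.
by rewrite big_cons; apply: spanD.
Qed.

Lemma closure_spanB (ip : V -> V -> R[i]) x y : is_hilbert ip ->
  in_closure ip (in_span S) x -> in_closure ip (in_span S) y ->
  in_closure ip (in_span S) (x - y).
Proof.
move=> H hx hy eps e0; have e2 : 0 < eps / 2 by rewrite divr_gt0.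
have [x' [sx nx]] := hx _ e2; have [y' [sy ny]] := hy _ e2.
exists (x' - y'); split; first by apply: spanD => //; rewrite -scaleN1r; apply: spanZ.
rewrite (_ : x - y - (x' - y') = (x - x') + - (y - y')); last first.
  by rewrite opprD opprK addrACA opprB [- y + _]addrC.
apply: le_lt_trans (ipnormD H _ _) _.
by rewrite ipnormN // [eps]splitr ltrD.
Qed.

End Span.

Section MatrixOfA.
Variables (R : realType) (L : lmodType R[i]) (ipL : L -> L -> R[i]).
Variables (J A : L -> L) (e : nat -> L).
Hypotheses (HL : is_hilbert ipL) (HJ : is_conjugation ipL J) (HA : bounded_op ipL A)
  (HS : is_symmetric ipL J A) (He : complete_ONS ipL e).

Lemma conjugationK x : J (J x) = x. Proof. exact: HJ.2.1. Qed.

Lemma ip_conjugation f g : ipL (J f) (J g) = ipL g f. Proof. exact: HJ.2.2. Qed.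

(* [alpha k l] is the coefficient of [A e_k] on the basis vector [J e_l] *)
Definition alpha k l := ipL (J (A (e k))) (e l).

Lemma alphaE k l : alpha k l = ipL (J (e l)) (A (e k)).
Proof. by rewrite /alpha -{1}(conjugationK (e l)) ip_conjugation. Qed.

Lemma alpha_sym k l : alpha k l = alpha l k.
Proof. by rewrite alphaE ipC // (HS (e k) (J (e l))) /= conjugationK -ipC. Qed.

Lemma conjugate_basis_ONS : complete_ONS ipL (fun l => J (e l)).
Proof.
split=> [i j|f hf]; first by rewrite ip_conjugation He.1 eq_sym.
have J0 : J 0 = 0.
  have := HJ.1 1 0 0; rewrite scale1r addr0 rmorph1 scale1r => h.
  by apply/(addrI (J 0)); rewrite addr0 -h.
rewrite -(conjugationK f) (_ : J f = 0) //; apply: He.2 => j.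
by rewrite ipC // -{1}(conjugationK (e j)) ip_conjugation hf conjc0.
Qed.

Lemma row_bessel k N : \sum_(0 <= l < N) sqmod (alpha k l) <= ipnorm2 ipL (A (e k)).
Proof.
have := bessel HL conjugate_basis_ONS (A (e k)) N.
by under eq_bigr do rewrite -alphaE.
Qed.

Lemma row_parseval k eps : 0 < eps ->
  exists N, ipnorm2 ipL (A (e k)) - eps < \sum_(0 <= l < N) sqmod (alpha k l).
Proof.
move=> e0; have [N hN] := parseval HL conjugate_basis_ONS (A (e k)) e0; exists N.
by move: hN; under eq_bigr do rewrite -alphaE.
Qed.

Lemma ipnorm2_A_basis_bounded : exists K : R, forall k, ipnorm2 ipL (A (e k)) <= K.
Proof.
have [_ [K hK]] := HA; exists (K ^+ 2) => k.
have := hK (e k) I; rewrite /ipnorm He.1 eqxx /= sqrtr1 mulr1 -/(ipnorm ipL _) => hk.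
by rewrite -sqr_ipnorm // ler_pXn2r // nnegrE ?ipnorm_ge0 // (le_trans _ hk) ?ipnorm_ge0.
Qed.

Definition hs_partial N := \sum_(0 <= k < N) ipnorm2 ipL (A (e k)).

Definition block_mass p q := \sum_(p <= k < q) \sum_(p <= l < q) sqmod (alpha k l).

Lemma hs_partial_approx N d : 0 < d -> exists M,
  hs_partial N - d < \sum_(0 <= k < N) \sum_(0 <= l < M) sqmod (alpha k l).
Proof.
elim: N d => [|N IH] d d0.
  by exists 0%N; rewrite /hs_partial !big_geq // sub0r oppr_lt0.
have d2 : 0 < d / 2 by rewrite divr_gt0 ?ltr0n.
have [M1 h1] := IH _ d2; have [M2 h2] := row_parseval N d2.
exists (maxn M1 M2); rewrite /hs_partial !big_nat_recr //= -/(hs_partial N).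
have s1 : \sum_(0 <= k < N) \sum_(0 <= l < M1) sqmod (alpha k l) <=
          \sum_(0 <= k < N) \sum_(0 <= l < maxn M1 M2) sqmod (alpha k l).
  apply: ler_sum => k _; apply: ler_sum_nat_widen => //.
  - exact: leq_maxl.
  - by move=> l; apply: sqmod_ge0.
have s2 : \sum_(0 <= l < M2) sqmod (alpha N l) <=
          \sum_(0 <= l < maxn M1 M2) sqmod (alpha N l).
  apply: ler_sum_nat_widen => //.
  - exact: leq_maxr.
  - by move=> l; apply: sqmod_ge0.
move: h1 h2 s1 s2; rewrite [d in _ - d]splitr; lra.
Qed.

(* rows (and, by symmetry, columns) of index below n carry at most n K of mass *)
Lemma block_mass_tail n N K : (forall k, ipnorm2 ipL (A (e k)) <= K) -> (n <= N)%N ->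
  block_mass 0 N <= block_mass n N + 2 * n%:R * K.
Proof.
move=> hK nN; set g := fun k l => sqmod (alpha k l).
have g0 k l : 0 <= g k l by apply: sqmod_ge0.
have row k M : \sum_(0 <= l < M) g k l <= K := le_trans (row_bessel k M) (hK k).
have rows M : \sum_(0 <= k < n) \sum_(0 <= l < M) g k l <= n%:R * K.
  apply: le_trans (ler_sum _ (fun k _ => row k M)) _.
  by rewrite sumr_const_nat subn0 mulr_natl.
have cols : \sum_(n <= k < N) \sum_(0 <= l < n) g k l <= n%:R * K.
  apply: le_trans (rows N); rewrite exchange_big_nat /=.
  under [X in _ <= X]eq_bigr => l _ do under eq_bigr => k _ do rewrite /g alpha_sym.
  apply: ler_sum => l _; rewrite /g (big_cat_nat (leq0n n) nN) /= lerDr.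
  by apply: sumr_ge0 => k _; apply: sqmod_ge0.
rewrite /block_mass (big_cat_nat (leq0n n) nN) /=.
rewrite [X in _ + X <= _](_ : _ = \sum_(n <= k < N) \sum_(0 <= l < n) g k l +
     \sum_(n <= k < N) \sum_(n <= l < N) g k l); last first.
  by rewrite -big_split /=; apply: eq_bigr => k _; rewrite (big_cat_nat (leq0n n) nN).
by move: (rows N) cols; rewrite -/g; lra.
Qed.

Lemma hilbert_schmidt_or_large_blocks : hilbert_schmidt ipL A \/
  (forall n B, exists N, (n < N)%N /\ B <= block_mass n N).
Proof.
have hs_inc N : hs_partial N <= hs_partial N.+1.
  by rewrite /hs_partial big_nat_recr //= lerDl ipnorm2_ge0.
case: (pselect (exists B, forall N, hs_partial N <= B)) => [[B hB]|unbounded].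
  left; have [s [hs hcv]] := nondecreasing_bounded_sup hs_inc hB.
  exists e; split => //; exists s => eps e0; have [N hN] := hcv _ e0; exists N => M hM.
  have -> : \sum_(j < M) ipnorm ipL (A (e j)) ^+ 2 = hs_partial M.
    by rewrite /hs_partial big_mkord; apply: eq_bigr => j _; rewrite sqr_ipnorm.
  rewrite ler0_norm ?subr_le0 //; have := hN M hM; lra.
right => n B; have [K hK] := ipnorm2_A_basis_bounded.
have [N1 hN1] : exists N1, B + 2 * n%:R * K + 1 < hs_partial N1.
  apply: contrapT => small; apply: unbounded; exists (B + 2 * n%:R * K + 1) => N.
  by rewrite leNgt; apply/negP => big; apply: small; exists N.
have [M hM] := hs_partial_approx N1 ltr01.
pose N := maxn (maxn N1 M) n.+1; exists N; split; first by rewrite !leq_max ltnSn orbT.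
have h1 : \sum_(0 <= k < N1) \sum_(0 <= l < M) sqmod (alpha k l) <= block_mass 0 N.
  have N1N : (N1 <= N)%N by rewrite !leq_max leqnn.
  have MN : (M <= N)%N by rewrite !leq_max leqnn orbT.
  apply: le_trans (_ : _ <= \sum_(0 <= k < N1) \sum_(0 <= l < N) sqmod (alpha k l)) _.
    by apply: ler_sum => k _; apply: ler_sum_nat_widen => // l; apply: sqmod_ge0.
  by apply: ler_sum_nat_widen => // k; apply: sumr_ge0 => l _; apply: sqmod_ge0.
have nN : (n <= N)%N by rewrite !leq_max leqnSn orbT.
by move: hN1 hM h1 (block_mass_tail hK nN); lra.
Qed.

End MatrixOfA.

Section TwoParticleVectors.
Variables (R : realType) (L F : lmodType R[i]).
Variables (ipL : L -> L -> R[i]) (ipF : F -> F -> R[i]) (J : L -> L).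
Variables (D : F -> Prop) (a ad : L -> F -> F) (Omega : F) (A : L -> L) (e : nat -> L).
Hypotheses (HL : is_hilbert ipL) (HJ : is_conjugation ipL J) (HF : is_hilbert ipF)
  (HK : is_fock_rep ipL ipF J a ad Omega D)
  (HS : is_symmetric ipL J A) (He : complete_ONS ipL e).

Local Notation alpha := (alpha ipL J A e).
Local Notation Delta := (DeltaM J a A e).
Local Notation P2 := (npart ipF ad Omega 2).
Local Notation mass := (block_mass ipL J A e).
Local Notation fock2 :=
  (fun y => exists fs : seq L, size fs = 2%N /\ y = fockvec ad Omega fs).
Let HD := D_sub HK.
Let DO := Omega_D HK.

Definition phi l := ad (e l) Omega.
Definition psi k l := ad (e k) (phi l).

Lemma D_phi l : D (phi l). Proof. exact: (D_ad HK _ DO). Qed.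
Lemma D_psi k l : D (psi k l). Proof. exact: (D_ad HK _ (D_phi l)). Qed.

Lemma a_phi j l : a (J (e j)) (phi l) = (j == l)%:R *: Omega.
Proof.
have := ccr_aad HK (J (e j)) (e l) DO.
by rewrite (a_Omega HK) (linear_on0 HD (ad_linx HK _)) subr0 (conjugationK HJ) He.1.
Qed.

Lemma a_psi j k l :
  a (J (e j)) (psi k l) = (j == k)%:R *: phi l + (j == l)%:R *: phi k.
Proof.
have := ccr_aad HK (J (e j)) (e k) (D_phi l); rewrite a_phi (conjugationK HJ) He.1.
rewrite (linear_onZ HD (ad_linx HK _)) // => /eqP; rewrite subr_eq => /eqP ->.
by rewrite addrC.
Qed.

Lemma aA_phi j l : a (A (e j)) (phi l) = alpha j l *: Omega.
Proof.
have := ccr_aad HK (A (e j)) (e l) DO.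
by rewrite (a_Omega HK) (linear_on0 HD (ad_linx HK _)) subr0.
Qed.

Lemma DeltaM_psi M k l :
  Delta M (psi k l) = (((k < M)%N%:R + (l < M)%N%:R) * alpha k l) *: Omega.
Proof.
rewrite /DeltaM -(big_mkord xpredT (fun j => a (A (e j)) (a (J (e j)) (psi k l)))).
under eq_bigr => j _.
  rewrite a_psi (linear_onD (a_linx HK _)); try by apply: (subspaceZ HD); apply: D_phi.
  rewrite !(linear_onZ HD (a_linx HK _)); try exact: D_phi.
  rewrite !aA_phi !scalerA -scalerDl.
  over.
rewrite -scaler_suml big_split /=.
under eq_bigr => i _ do rewrite (eq_sym i k).
under [X in _ + X]eq_bigr => i _ do rewrite (eq_sym i l).
by rewrite !sum_nat_delta /= [alpha l k](alpha_sym e HL HJ HS); congr (_ *: _); ring.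
Qed.

Lemma ip_ad_e k x z : D x -> D z -> ipF (ad (e k) x) z = ipF x (a (J (e k)) z).
Proof.
move=> hx hz; have := a_adj HK (J (e k)) hz hx; rewrite (conjugationK HJ) => h.
by rewrite (ipC HF) -h -(ipC HF).
Qed.

Lemma ip_phi l n : ipF (phi l) (phi n) = (l == n)%:R.
Proof. by rewrite (ip_ad_e l DO (D_phi n)) a_phi (ipZr HF) (Omega_unit HK) mulr1. Qed.

Lemma ip_psi k l m n : ipF (psi k l) (psi m n) =
  (k == m)%:R * (l == n)%:R + (k == n)%:R * (l == m)%:R.
Proof.
rewrite (ip_ad_e k (D_phi l) (D_psi m n)) a_psi (ipDr HF) !(ipZr HF) !ip_phi.
by rewrite mulrC [(k == n)%:R * _]mulrC.
Qed.

Lemma DeltaM_sum M (I : Type) (r : seq I) (v : I -> F) : (forall i, D (v i)) ->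
  Delta M (\sum_(i <- r) v i) = \sum_(i <- r) Delta M (v i).
Proof.
move=> hv; rewrite /DeltaM exchange_big; apply: eq_bigr => j _.
rewrite (linear_on_sum HD (a_linx HK _)) // (linear_on_sum HD (a_linx HK _)) //.
by move=> i; apply: (D_a HK).
Qed.

Lemma DeltaM_Z M c v : D v -> Delta M (c *: v) = c *: Delta M v.
Proof.
move=> hv; rewrite /DeltaM scaler_sumr; apply: eq_bigr => j _.
rewrite (linear_onZ HD (a_linx HK _)) // (linear_onZ HD (a_linx HK _)) //.
exact: (D_a HK).
Qed.

Lemma DeltaM_lipschitz M : exists C, forall y z, P2 y -> P2 z ->
  ipnorm ipF (Delta M y - Delta M z) <= C * ipnorm ipF (y - z).
Proof.
elim: M => [|M [C hC]].
  by exists 0 => y z _ _; rewrite /DeltaM !big_ord0 subrr (ipnorm0 HF) mul0r.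
have [lin1 [K1 hK1]] := a_bdd HK (J (e M)) 1.
have [lin2 [K2 hK2]] := a_bdd HK (A (e M)) 0.
exists (C + Num.max K2 0 * K1) => y z Py Pz.
rewrite /DeltaM !big_ord_recr /= -!/(Delta M _) opprD addrACA.
apply: le_trans (ipnormD HF _ _) _; rewrite mulrDl lerD ?hC //.
have Pyz : P2 (y - z) by apply: closure_spanB.
rewrite -(linear_onB lin2); try by apply: (a_npart HK).
rewrite -(linear_onB lin1) //.
apply: le_trans (hK2 _ (a_npart HK _ Pyz)) _.
have K2max : K2 <= Num.max K2 0 by rewrite le_max lexx.
apply: le_trans (ler_wpM2r (ipnorm_ge0 ipF _) K2max) _.
by rewrite -mulrA ler_wpM2l ?le_max ?lexx ?orbT ?hK1.
Qed.

Lemma DeltaM_closure_lim M (u : nat -> F) x c n0 :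
  (forall n, P2 (u n)) -> P2 x -> ip_cvg_to ipF u x ->
  (forall n, (n0 <= n)%N -> Delta M (u n) = c) -> Delta M x = c.
Proof.
move=> Pu Px ux uc; have [C hC] := DeltaM_lipschitz M.
apply/eqP; rewrite -subr_eq0; apply/eqP; apply: (ipnorm_eq0 HF).
apply/eqP; rewrite eq_le ipnorm_ge0 andbT; apply/ler_addgt0Pr => eps e0.
rewrite add0r; pose C1 := Num.max C 0 + 1.
have C10 : 0 < C1 by rewrite ltr_pwDr ?ltr01 ?le_max ?lexx ?orbT.
have [N hN] := ux (eps / C1) (divr_gt0 e0 C10).
pose n := maxn N n0; rewrite -(uc n) ?leq_maxr //.
apply: le_trans (hC _ _ Px (Pu n)) _.
have hn : ipnorm ipF (x - u n) <= eps / C1.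
  by rewrite (ipnormB HF); apply/ltW/hN; rewrite leq_maxl.
apply: le_trans (ler_wpM2r (ipnorm_ge0 ipF _) (_ : C <= C1)) _.
  by rewrite ler_wpDr ?ler01 ?le_max ?lexx.
by rewrite mulrC -ler_pdivlMr.
Qed.

Definition block_vector p q (t : R) :=
  \sum_(p <= k < q) \sum_(p <= l < q) (t%:C * conjc (alpha k l)) *: psi k l.

Lemma D_block_vector p q t : D (block_vector p q t).
Proof.
apply: (subspace_sum HD) => k; apply: (subspace_sum HD) => l.
by apply: (subspaceZ HD); apply: D_psi.
Qed.

Lemma span_block_vector p q t : in_span fock2 (block_vector p q t).
Proof.
apply: span_sum => k; apply: span_sum => l; apply: spanZ; apply: span_gen.
by exists [:: e k; e l].
Qed.

Lemma DeltaM_block_vector M p q t : Delta M (block_vector p q t) =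
  (\sum_(p <= k < q) \sum_(p <= l < q)
     t%:C * conjc (alpha k l) * (((k < M)%N%:R + (l < M)%N%:R) * alpha k l)) *: Omega.
Proof.
rewrite DeltaM_sum; last first.
  by move=> k; apply: (subspace_sum HD) => l; apply: (subspaceZ HD); apply: D_psi.
rewrite scaler_suml; apply: eq_bigr => k _.
rewrite DeltaM_sum; last by move=> l; apply: (subspaceZ HD); apply: D_psi.
rewrite scaler_suml; apply: eq_bigr => l _.
by rewrite (DeltaM_Z _ _ (D_psi k l)) DeltaM_psi scalerA.
Qed.

Lemma DeltaM_block_vector_ge M p q t : (q <= M)%N ->
  Delta M (block_vector p q t) = (2 * t * mass p q)%:C *: Omega.
Proof.
move=> qM; rewrite DeltaM_block_vector /block_mass mulr_sumr realc_sum.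
congr (_ *: _); apply: eq_big_nat => k /andP[_ hk].
rewrite mulr_sumr realc_sum; apply: eq_big_nat => l /andP[_ hl].
rewrite (leq_trans hk qM) (leq_trans hl qM) realc_mul_sqmod rmorphM rmorph_nat /=.
ring.
Qed.

Lemma DeltaM_block_vector_le M p q t : (M <= p)%N ->
  Delta M (block_vector p q t) = 0.
Proof.
move=> Mp; rewrite DeltaM_block_vector big_nat big1 ?scale0r // => k /andP[hk _].
rewrite big_nat big1 // => l /andP[hl _].
by rewrite ltnNge (leq_trans Mp hk) ltnNge (leq_trans Mp hl) addr0 mul0r mulr0.
Qed.

Lemma ipnorm2_block_vector p q t :
  ipnorm2 ipF (block_vector p q t) = 2 * t ^+ 2 * mass p q.
Proof.
apply: complexI; rewrite -(ipxx HF) {1}/block_vector (ip_suml HF) /block_mass.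
rewrite mulr_sumr realc_sum; apply: eq_big_nat => k /andP[pk kq].
rewrite (ip_suml HF) mulr_sumr realc_sum; apply: eq_big_nat => l /andP[pl lq].
rewrite (ipZl HF) /block_vector (ip_sumr HF).
under eq_bigr => m _ do rewrite (ip_sumr HF).
under eq_bigr => m _ do under eq_bigr => n _ do rewrite (ipZr HF) ip_psi.
rewrite sum_nat2_sym_delta ?pk ?pl // [alpha l k](alpha_sym e HL HJ HS).
rewrite conjc_realcM conjcK realc_mul_sqmod rmorphM rmorphXn rmorph_nat; ring.
Qed.

Lemma ipnorm_block_vector_le p q eps : 0 < eps ->
  (2 * eps ^+ 2)^-1 <= mass p q ->
  ipnorm ipF (block_vector p q (2 * mass p q)^-1) <= eps.
Proof.
set m := mass p q => e0 hm.
have m0 : 0 < m by apply: lt_le_trans hm; rewrite invr_gt0 mulr_gt0 ?exprn_gt0.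
rewrite -ler_sqr ?nnegrE ?ipnorm_ge0 ?(ltW e0) // (sqr_ipnorm HF) ipnorm2_block_vector.
rewrite -/m (_ : _ * m = (2 * m)^-1); last by field; rewrite gt_eqF.
rewrite -(invrK (eps ^+ 2)) lef_pV2 ?posrE ?mulr_gt0 ?invr_gt0 ?exprn_gt0 //.
have -> : eps ^- 2 = 2 * (2 * eps ^+ 2)^-1 by field; rewrite gt_eqF.
by rewrite ler_pM2l.
Qed.

Lemma large_blocks_not_DeltaM_cvg :
  (forall x, P2 x -> exists l, ip_cvg_to ipF (fun M => Delta M x) l) ->
  ~ (forall n B, exists N, (n < N)%N /\ B <= mass n N).
Proof.
move=> hcvg large.
pose threshold i := (2 * pow2inv R i ^+ 2)^-1.
have [N [N0 hN]] := @exists_increasing_chain (fun i n n' => threshold i <= mass n n')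
  (fun i n => large n (threshold i)).
have Nmono : {homo N : i j / (i <= j)%N}.
  by apply: homo_leq => // [|i]; [exact: leq_trans | exact/ltnW/(hN i).1].
pose X i := block_vector (N i) (N i.+1) (2 * mass (N i) (N i.+1))^-1.
have [x hx] : exists x, ip_cvg_to ipF (fun n => \sum_(0 <= i < n) X i) x.
  apply: (pow2inv_series_cvg HF) => i.
  by apply: ipnorm_block_vector_le; [exact: pow2inv_gt0 | exact: (hN i).2].
have spanS n : in_span fock2 (\sum_(0 <= i < n) X i).
  by apply: span_sum => i; apply: span_block_vector.
have PS n : P2 (\sum_(0 <= i < n) X i) by apply: (closure_span HF).
have Px : P2 x := closure_lim HF spanS hx.
have mass_gt0 i : 0 < mass (N i) (N i.+1).
  apply: lt_le_trans (hN i).2.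
  by rewrite /threshold invr_gt0 mulr_gt0 ?exprn_gt0 ?pow2inv_gt0.
have DeltaX j i : Delta (N j) (X i) = (i < j)%N%:R *: Omega.
  case: (ltnP i j) => ij; last by rewrite DeltaM_block_vector_le ?scale0r // Nmono.
  rewrite DeltaM_block_vector_ge; last exact: Nmono.
  rewrite (_ : 2 / _ * _ = 1) ?rmorph1 //.
  by field; rewrite gt_eqF.
have Dx j : Delta (N j) x = j%:R *: Omega.
  apply: (DeltaM_closure_lim (n0 := j) PS Px hx) => n jn.
  rewrite DeltaM_sum; last by move=> i; apply: D_block_vector.
  by under eq_bigr do rewrite DeltaX; rewrite -scaler_suml sum_nat_indicator_lt.
have [l hl] := hcvg x Px.
apply: (arith_progression_not_cvg HF (Omega_unit HK) _ Dx hl).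
by elim=> [|i IH]; [rewrite N0 | exact: leq_ltn_trans IH (hN i).1].
Qed.

End TwoParticleVectors.

Theorem proposition5p8
  (R : realType) (L F : lmodType R[i])
  (ipL : L -> L -> R[i]) (ipF : F -> F -> R[i]) (J : L -> L)
  (D : F -> Prop) (a ad : L -> F -> F) (Omega : F)
  (A : L -> L) (e : nat -> L) :
  is_hilbert ipL -> is_conjugation ipL J ->
  is_hilbert ipF -> is_fock_rep ipL ipF J a ad Omega D ->
  bounded_op ipL A -> is_symmetric ipL J A ->
  complete_ONS ipL e ->
  (forall x : F, npart ipF ad Omega 2 x ->
     exists l : F, ip_cvg_to ipF (fun M => DeltaM J a A e M x) l) ->
  hilbert_schmidt ipL A.
Proof.
move=> HL HJ HF HK HA HS He hcvg.
have [//|large] := hilbert_schmidt_or_large_blocks HL HJ HA HS He.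
by case: (large_blocks_not_DeltaM_cvg HL HJ HF HK HS He hcvg).
Qed.
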